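(* For $n\ge 2$, let $Q_n$ be the $n$-dimensional hypercube graph and let $c_1(Q_n)$ be the largest invariant factor (the exponent) of its sandpile group $K(Q_n)$. Then $$v_2(c_1(Q_n))=\max\Big\{\max_{1\le x<n}\{v_2(x)+x\},\; v_2(n)+n-1\Big\}.$$
   Context: $Q_n$ is the graph with vertex set $\mathbb{F}_2^n$ in which $u,w$ are adjacent iff they differ in exactly one coordinate. Its Laplacian is $L=D-A$ ($D$ the degree matrix, $A$ the adjacency matrix), and $\operatorname{coker}(L:\mathbb{Z}^{2^n}\to\mathbb{Z}^{2^n})\cong\mathbb{Z}\oplus K(Q_n)$ with $K(Q_n)$ a finite abelian group (the sandpile group). $v_2(x)$ denotes the exponent of the largest power of $2$ dividing the integer $x$. *)

From HB Require Import structures.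
From mathcomp Require Import all_boot all_order all_algebra.
Set Implicit Arguments. Unset Strict Implicit. Unset Printing Implicit Defensive.
Import Order.TTheory GRing.Theory Num.Theory.
Local Open Scope ring_scope.

Definition cube_vertex (n : nat) := {ffun 'I_n -> bool}.

Definition cube_adj (n : nat) (u w : cube_vertex n) : bool :=
  #|[set i : 'I_n | u i != w i]| == 1%N.

Definition cube_deg (n : nat) (u : cube_vertex n) : nat :=
  #|[set w : cube_vertex n | cube_adj u w]|.

Definition cube_N (n : nat) : nat := #|{: cube_vertex n}|.

Definition cube_laplacian (n : nat) : 'M[int]_(cube_N n) :=
  \matrix_(i, j)
    ((if i == j then (cube_deg (enum_val i))%:Z else 0)
     - (if cube_adj (enum_val i) (enum_val j) then 1 else 0)).

Definition in_lap_image (n : nat) (v : 'cV[int]_(cube_N n)) : Prop :=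
  exists x : 'cV[int]_(cube_N n), cube_laplacian n *m x = v.

(* The class of v in coker L is a torsion element, i.e. lies in K(Q_n). *)
Definition coker_torsion (n : nat) (v : 'cV[int]_(cube_N n)) : Prop :=
  exists k : nat, (0 < k)%N /\ in_lap_image (v *+ k).

Definition annihilates_sandpile (n m : nat) : Prop :=
  forall v : 'cV[int]_(cube_N n), coker_torsion v -> in_lap_image (v *+ m).

(* m is the exponent of K(Q_n) (= its largest invariant factor c_1). *)
Definition is_sandpile_exponent (n m : nat) : Prop :=
  [/\ (0 < m)%N, annihilates_sandpile n m &
      forall m', (0 < m')%N -> annihilates_sandpile n m' -> (m <= m')%N].

(* The sandpile group is the sum-zero part of Z^V modulo the image of L.  Over
   Q the cube has the radial Green function
     G(u) = - 2^-n (kappa(0) + ... + kappa(|u| - 1)),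
     kappa(w) = integral of t^w (2 - t)^(n-1-w) over [0, 1],
   with L G = delta_0 - 2^-n, and its translates give potentials r with
   L r = delta_a - delta_(a + e_i).  Expanding kappa(w) binomially, its terms
   are signed multiples of 2^(n-k)/k for w < k <= n, so c = 2^E (n!)_2', with
   E the claimed valuation, makes every such r integral up to a constant: c
   kills every edge vector, hence the whole group.  Conversely, if m kills the group then, L being symmetric,
   m (r(g) - r(g')) is an integer for every edge g g'.  Taking g' the all-ones
   vertex, or g, g' the indicator vectors of the first x - 1 and x coordinates
   with x the largest maximiser of v_2(x) + x, this forces 2^E | m.  So the
   exponent divides c and is divisible by 2^E. *)

From mathcomp Require Import all_boot all_order all_algebra.
From mathcomp Require Import ring lra zify.
From Stdlib Require Import Classical Wf_nat.
Set Implicit Arguments. Unset Strict Implicit. Unset Printing Implicit Defensive.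
Import Order.TTheory GRing.Theory Num.Theory.
Local Open Scope ring_scope.

Section CubeLaplacian.
Variable n : nat.
Local Notation V := (cube_vertex n).
Implicit Types (u v a : V) (i : 'I_n).

Definition flip (v : V) (i : 'I_n) : V :=
  [ffun j => if j == i then ~~ v j else v j].

Lemma flipK i : involutive (flip^~ i).
Proof. by move=> v; apply/ffunP=> j; rewrite !ffunE; case: eqP => // _; rewrite negbK. Qed.

Lemma eq_flipE (v w : V) i : (w == flip v i) = ([set j | v j != w j] == [set i]).
Proof.
apply/eqP/eqP => [-> | /setP vw].
  by apply/setP=> j; rewrite !inE ffunE; case: (j =P i) => _; rewrite ?eqxx //; case: (v j).
apply/ffunP=> j; rewrite ffunE; move: (vw j); rewrite !inE.
by case: (j =P i) => _; case: (v j); case: (w j).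
Qed.

Lemma big_cube_adj (R : nmodType) (v : V) (F : V -> R) :
  \sum_(w | cube_adj v w) F w = \sum_(i < n) F (flip v i).
Proof.
transitivity (\sum_(i < n) \sum_(w | w == flip v i) F w); last first.
  by apply: eq_bigr => i _; rewrite big_pred1_eq.
rewrite (exchange_big_dep xpredT) // [LHS]big_mkcond; apply: eq_bigr => w _.
under eq_bigl => i do rewrite /= eq_flipE.
rewrite /cube_adj; have [[i0 ->]|not_adj] := altP (@cards1P _ [set j | v j != w j]).
  rewrite (eq_bigl (pred1 i0)) ?big_pred1_eq // => j.
  by rewrite /= (inj_eq (@set1_inj _)) eq_sym.
by rewrite big_pred0 // => j; apply: contraNF not_adj => /eqP ->; rewrite cards1.
Qed.

Lemma cube_degE (v : V) : cube_deg v = n.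
Proof.
rewrite /cube_deg -sum1_card (eq_bigl (cube_adj v)) => [|w]; last by rewrite inE.
by rewrite (big_cube_adj v (fun=> 1%N)) sum1_card card_ord.
Qed.

Definition cube_lap (R : zmodType) (f : V -> R) (v : V) : R :=
  f v *+ n - \sum_(i < n) f (flip v i).

Lemma cube_laplacianE (x : 'cV[int]_(cube_N n)) (v : V) :
  (cube_laplacian n *m x) (enum_rank v) 0 = cube_lap (fun w => x (enum_rank w) 0) v.
Proof.
rewrite !mxE (reindex _ (onW_bij _ (@enum_rank_bij _))) /=.
under eq_bigr => w _ do rewrite !mxE !enum_rankK mulrBl.
rewrite sumrB (bigD1 v) //= eqxx big1 => [|w /negbTE w_v]; last first.
  by rewrite (inj_eq enum_rank_inj) eq_sym w_v mul0r.
rewrite addr0 cube_degE /cube_lap -(big_cube_adj v (fun w => x (enum_rank w) 0)).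
rewrite [in RHS]big_mkcond /=.
congr (_ - _); first by rewrite mulrC -[X in _ * X]natz mulr_natr.
by apply: eq_bigr => w _; case: ifP; rewrite ?mul1r ?mul0r.
Qed.

Section Linearity.
Variable R : zmodType.
Implicit Types f g : V -> R.

Lemma eq_cube_lap f g : f =1 g -> cube_lap f =1 cube_lap g.
Proof. by move=> fg v; rewrite /cube_lap fg; under eq_bigr do rewrite fg. Qed.

Lemma cube_lapB f g v : cube_lap (fun w => f w - g w) v = cube_lap f v - cube_lap g v.
Proof.
rewrite /cube_lap sumrB mulrnBl !opprB addrACA [RHS]addrACA.
by congr (_ + _); apply: addrC.
Qed.

Lemma cube_lap_cst (c : R) v : cube_lap (fun=> c) v = 0.
Proof. by rewrite /cube_lap sumr_const card_ord subrr. Qed.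

Lemma sum_cube_lap f : \sum_v cube_lap f v = 0.
Proof.
rewrite sumrB sumrMnl exchange_big /=.
under [X in _ - X]eq_bigr => i _ do rewrite (reindex_inj (can_inj (flipK i))) /=.
under [X in _ - X]eq_bigr => i _ do under eq_bigr do rewrite flipK.
by rewrite sumr_const card_ord subrr.
Qed.

Lemma raddf_cube_lap (S : zmodType) (phi : {additive R -> S}) f v :
  phi (cube_lap f v) = cube_lap (phi \o f) v.
Proof. by rewrite raddfB raddfMn raddf_sum. Qed.

End Linearity.

Lemma cube_lapMl (R : pzRingType) (c : R) (f : V -> R) v :
  cube_lap (fun w => c * f w) v = c * cube_lap f v.
Proof. by rewrite /cube_lap mulrBr mulrnAr mulr_sumr. Qed.

Lemma cube_lap_sym (R : comPzRingType) (f g : V -> R) :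
  \sum_v f v * cube_lap g v = \sum_v cube_lap f v * g v.
Proof.
under eq_bigr do rewrite mulrBr mulr_sumr mulrnAr.
under [RHS]eq_bigr do rewrite mulrBl mulr_suml mulrnAl.
rewrite !sumrB; congr (_ - _); rewrite exchange_big [RHS]exchange_big /=.
apply: eq_bigr => i _; rewrite (reindex_inj (can_inj (flipK i))) /=.
by apply: eq_bigr => v _; rewrite flipK mulrC.
Qed.

Definition cube0 : V := [ffun=> false].

Lemma cube0E i : cube0 i = false.
Proof. by rewrite ffunE. Qed.

Definition cube_add (u a : V) : V := [ffun j => u j (+) a j].

Lemma cube_add_flipl u a i : cube_add (flip u i) a = flip (cube_add u a) i.
Proof. by apply/ffunP=> j; rewrite !ffunE; case: (j == i); rewrite ?addNb. Qed.

Lemma cube_add_flipr u a i : cube_add u (flip a i) = flip (cube_add u a) i.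
Proof. by apply/ffunP=> j; rewrite !ffunE; case: (j == i); rewrite ?addbN. Qed.

Lemma cube_add_eq0 u a : (cube_add u a == cube0) = (u == a).
Proof.
apply/eqP/eqP => [/ffunP ua | ->]; last by apply/ffunP=> j; rewrite !ffunE addbb.
by apply/ffunP=> j; move: (ua j); rewrite !ffunE; case: (u j); case: (a j).
Qed.

Lemma cube_addr0 u : cube_add u cube0 = u.
Proof. by apply/ffunP=> j; rewrite !ffunE addbF. Qed.

Lemma cube_lap_add (R : zmodType) (f : V -> R) a v :
  cube_lap (fun w => f (cube_add w a)) v = cube_lap f (cube_add v a).
Proof. by rewrite /cube_lap; under eq_bigr do rewrite cube_add_flipl. Qed.

Definition wt (u : V) : nat := \sum_(j < n) u j.

Lemma wt_flip u i : wt (flip u i) = if u i then (wt u).-1 else (wt u).+1.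
Proof.
rewrite /wt (bigD1 i) //= [in RHS](bigD1 i) //= ffunE eqxx.
under eq_bigr => j /negbTE ji do rewrite ffunE ji.
by case: (u i).
Qed.

Lemma wt_addC u : (wt u + \sum_(j < n) ~~ u j)%N = n.
Proof.
rewrite -big_split /= -[RHS]card_ord -sum1_card.
by apply: eq_bigr => j _; case: (u j).
Qed.

Lemma wt_leq u : (wt u <= n)%N.
Proof. by rewrite -[X in (_ <= X)%N](wt_addC u) leq_addr. Qed.

Lemma wt_ltn u i : ~~ u i -> (wt u < n)%N.
Proof.
by move=> ui; rewrite -[X in (_ < X)%N](wt_addC u) -addn1 leq_add2l (bigD1 i) //= ui.
Qed.

Lemma wt_eq0 u : (wt u == 0%N) = (u == cube0).
Proof.
rewrite /wt sum_nat_eq0; apply/forallP/eqP => [u0 | -> j]; last by rewrite cube0E.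
by apply/ffunP=> j; rewrite cube0E; move: (u0 j); case: (u j).
Qed.

Lemma wt_cube0 : wt cube0 = 0%N.
Proof. by apply/eqP; rewrite wt_eq0. Qed.

Lemma sumr_if_coord (R : nmodType) u (A B : R) :
  \sum_(i < n) (if u i then A else B) = A *+ wt u + B *+ (n - wt u).
Proof.
rewrite -[in (n - _)%N](wt_addC u) addKn -!sumrMnr -big_split /=.
by apply: eq_bigr => j _; case: (u j); rewrite ?addr0 ?add0r.
Qed.

Lemma cube_lap_radial (R : zmodType) (g : nat -> R) u :
  cube_lap (fun v => g (wt v)) u =
  g (wt u) *+ n - (g (wt u).-1 *+ wt u + g (wt u).+1 *+ (n - wt u)).
Proof.
by rewrite /cube_lap -sumr_if_coord; under eq_bigr do rewrite wt_flip fun_if.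
Qed.

Definition cube_prefix (k : nat) : V := [ffun j : 'I_n => (j < k)%N].

Lemma wt_cube_prefix k : (k <= n)%N -> wt (cube_prefix k) = k.
Proof.
move=> le_kn; rewrite /wt (eq_bigr (fun j : 'I_n => (j < k)%N : nat)) => [|j _]; last first.
  by rewrite ffunE.
have sum_ltn m : (\sum_(j < m) (j < k)%N)%N = minn k m.
  by elim: m => [|m IHm]; rewrite ?big_ord0 ?minn0 // big_ord_recr /= IHm; lia.
by rewrite sum_ltn; apply/minn_idPl.
Qed.

Lemma flip_cube_prefix k (lt_kn : (k < n)%N) :
  flip (cube_prefix k) (Ordinal lt_kn) = cube_prefix k.+1.
Proof.
apply/ffunP=> j; rewrite !ffunE -val_eqE /= [in RHS]ltnS [in RHS]leq_eqVlt.
by case: eqP => [-> | _]; rewrite ?ltnn.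
Qed.

End CubeLaplacian.

Arguments cube0 {n}.

(* [beta2 w a] is the binomial expansion of the integral of t^w (2 - t)^a over [0, 1]. *)
Definition beta2_term (w a i : nat) : rat :=
  (-1) ^+ i * 'C(a, i)%:R * 2%:R ^+ (a - i) / (w + i).+1%:R.

Definition beta2 (w a : nat) : rat := \sum_(i < a.+1) beta2_term w a i.

Lemma sum_binomS_pow2 a :
  \sum_(i < a.+1) (-1) ^+ i * 'C(a.+1, i.+1)%:R * 2%:R ^+ (a - i) = 2%:R ^+ a.+1 - 1 :> rat.
Proof.
have := exprBn (2%:R : rat) 1 a.+1.
rewrite big_ord_recl /= subn0 bin0 expr0 mul1r mulr1 expr1n mulr1n.
set S := \sum_(i < a.+1) _ => binom.
suff -> : \sum_(i < a.+1) (-1) ^+ i * 'C(a.+1, i.+1)%:R * 2%:R ^+ (a - i) = - S by lra.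
rewrite /S -sumrN; apply: eq_bigr => i _.
by rewrite /bump /= add1n subSS exprS expr1n -mulr_natr; ring.
Qed.

Lemma mulnr_binS (a i : nat) :
  a.+1%:R * 'C(a, i)%:R = i.+1%:R * 'C(a.+1, i.+1)%:R :> rat.
Proof. by rewrite -!natrM mul_bin_diag. Qed.

Lemma beta2_a0 w : beta2 w 0 = w.+1%:R^-1.
Proof. by rewrite /beta2 big_ord1 /beta2_term !mul1r addn0. Qed.

Lemma beta2_0a a : a.+1%:R * beta2 0 a = 2%:R ^+ a.+1 - 1.
Proof.
rewrite -sum_binomS_pow2 /beta2 mulr_sumr; apply: eq_bigr => i _.
rewrite /beta2_term add0n.
have -> : forall x y z : rat, a.+1%:R * (x * 'C(a, i)%:R * y / z) =
  x * (a.+1%:R * 'C(a, i)%:R) * y / z by move=> x y z; ring.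
by rewrite mulnr_binS; field; rewrite addrC natr1 pnatr_eq0.
Qed.

(* Integration by parts. *)
Lemma beta2S w a : w.+1%:R * beta2 w a.+1 - a.+1%:R * beta2 w.+1 a = 1.
Proof.
rewrite /beta2 big_ord_recl mulrDr !mulr_sumr -addrA -sumrB.
transitivity (2%:R ^+ a.+1 - (2%:R ^+ a.+1 - 1) : rat); last by rewrite opprB addrC subrK.
rewrite -sum_binomS_pow2 -sumrN.
congr (_ + _); first by rewrite /beta2_term subn0 addn0 bin0 !mul1r mulrC divfK ?pnatr_eq0.
apply: eq_bigr => i _; rewrite /beta2_term /= /bump /= add1n subSS addSn addnS.
have -> : forall x y z : rat, a.+1%:R * (x * 'C(a, i)%:R * y / z) =
  x * (a.+1%:R * 'C(a, i)%:R) * y / z by move=> x y z; ring.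
by rewrite mulnr_binS exprS; field; rewrite -!natrD pnatr_eq0.
Qed.

Section GreenFunction.
Variable n : nat.
Hypothesis n_gt0 : (0 < n)%N.
Local Notation V := (cube_vertex n).
Local Notation D := (2%:R ^+ n : rat).

Let D_neq0 : D != 0. Proof. by rewrite expf_neq0 ?pnatr_eq0. Qed.

Definition kappa (w : nat) : rat := beta2 w (n.-1 - w).

Lemma kappa_rec w : (w < n)%N -> w.+1%:R * kappa w - (n - w.+1)%:R * kappa w.+1 = 1.
Proof.
move=> lt_wn; rewrite /kappa; have [lt_w1n | ] := ltnP w.+1 n.
  have -> : (n.-1 - w = (n - w.+2).+1)%N by lia.
  have -> : (n.-1 - w.+1 = n - w.+2)%N by lia.
  have -> : (n - w.+1 = (n - w.+2).+1)%N by lia.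
  exact: beta2S.
move=> le_nw1; have w1_n : w.+1 = n by apply/eqP; rewrite eqn_leq lt_wn.
by rewrite w1_n subnn mul0r subr0 -w1_n subnn beta2_a0 mulfV ?pnatr_eq0.
Qed.

Lemma kappa_last : kappa n.-1 = n%:R^-1.
Proof. by rewrite /kappa subnn beta2_a0 prednK. Qed.

Definition green (u : V) : rat := - (\sum_(w < wt u) kappa w) / D.

Lemma cube_lap_green u : cube_lap green u = (u == cube0)%:R - D^-1.
Proof.
rewrite (cube_lap_radial (fun m => - (\sum_(w < m) kappa w) / D)) -wt_eq0.
have := wt_leq u; case: (wt u) => [_ | k le_k1n] /=.
  rewrite big_ord0 big_ord1 subn0 mulr0n add0r oppr0 mul0r mul0rn sub0r.
  have kappa0 : n%:R * kappa 0 = D - 1.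
    by rewrite /kappa subn0 -[in n%:R](prednK n_gt0) beta2_0a prednK.
  rewrite -[_ *+ n]mulr_natl.
  transitivity (n%:R * kappa 0 / D); first by field.
  by rewrite kappa0; field.
have rec := kappa_rec le_k1n.
rewrite -[_ *+ n]mulr_natl -[_ *+ k.+1]mulr_natl -[_ *+ (n - k.+1)]mulr_natl.
have -> : n%:R = k.+1%:R + (n - k.+1)%:R :> rat by rewrite -natrD subnKC.
rewrite !big_ord_recr /=.
transitivity (- (k.+1%:R * kappa k - (n - k.+1)%:R * kappa k.+1) / D); first by field.
by rewrite rec sub0r mulNr mul1r.
Qed.

Lemma green_flip u i : green u - green (flip u i) =
  if u i then - (kappa (wt u).-1 / D) else kappa (wt u) / D.
Proof.
rewrite /green wt_flip; case: ifP => [ui | _]; last by rewrite big_ord_recr /=; field.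
have : wt u != 0%N by rewrite wt_eq0; apply: contraTneq ui => ->; rewrite cube0E.
by case: (wt u) => [|k] //= _; rewrite big_ord_recr /=; field.
Qed.

Definition dipole (a : V) (i : 'I_n) (h : V) : rat :=
  green (cube_add h a) - green (flip (cube_add h a) i).

Lemma cube_lap_dipole a i h :
  cube_lap (dipole a i) h = (h == a)%:R - (h == flip a i)%:R.
Proof.
rewrite cube_lapB (@eq_cube_lap _ _ (fun w => green (flip (cube_add w a) i))
  (fun w => green (cube_add w (flip a i)))) => [|w].
  by rewrite !(cube_lap_add green) !cube_lap_green !cube_add_eq0 opprB addrA subrK.
by rewrite cube_add_flipr.
Qed.

End GreenFunction.

Lemma odd_2'part m : odd (m`_(2^'))%N.
Proof. by rewrite odd_2'nat part_pnat. Qed.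

Lemma sign_diff_half_int (a b : nat) : (((-1) ^+ a - (-1) ^+ b) / 2%:R : rat) \is a Num.int.
Proof.
rewrite -signr_odd -[(-1) ^+ b]signr_odd.
by case: (odd a); case: (odd b).
Qed.

Lemma pow2_dvdn_Qint (m e c : nat) (y : int) (X : rat) :
  ~~ (2 %| y)%Z -> (2 ^ e * c)%:R * X = y%:~R -> m%:R * X \is a Num.int ->
  (2 ^ e %| m)%N.
Proof.
move=> y_odd def_y /intrP[z mX].
have : ((2 ^ e)%:Z %| (m%:Z * y)%R)%Z.
  apply/dvdzP; exists (c%:Z * z); apply: (@intr_inj rat).
  by rewrite !rmorphM /= -mX -def_y -!pmulrn natrM; ring.
rewrite (Gauss_dvdzl m%:Z); first by rewrite dvdzE.
by rewrite /coprimez /=; apply: coprimeXl; rewrite coprime2n -[odd _]negbK -dvdn2.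
Qed.

Section Integrality.
Variable n : nat.
Local Notation N := n.-1.
Local Notation D := (2%:R ^+ n : rat).

Definition vmax := (\max_(1 <= x < n) (logn 2 x + x))%N.

Definition sandpile_v2 := maxn vmax (logn 2 n + n - 1).

Definition odd_fact := ((n`!)`_(2^'))%N.

Definition sandpile_bound := (2 ^ sandpile_v2 * odd_fact)%N.

Definition scale2 (e : nat) : rat := (2 ^ e * odd_fact)%N%:R / D.

(* v_2 (tau k) = n - k - v_2 k, and [kappa_split] writes [kappa n w] as an
   integer combination of the [tau k], w < k <= n. *)
Definition tau (k : nat) : rat := 2%:R ^+ (n - k) / k%:R.

Lemma leq_vmax k : (0 < k < n)%N -> (logn 2 k + k <= vmax)%N.
Proof.
by move=> k_range; apply: (leq_bigmax_seq k); rewrite ?mem_index_iota.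
Qed.

Lemma leq_sandpile_v2 k : (0 < k < n)%N -> (k + logn 2 k <= sandpile_v2)%N.
Proof. by move=> k_range; rewrite addnC (leq_trans (leq_vmax k_range)) ?leq_maxl. Qed.

Lemma leq_sandpile_v2_top : (n + logn 2 n <= sandpile_v2.+1)%N.
Proof. by have := leq_maxr vmax (logn 2 n + n - 1); rewrite -/sandpile_v2; lia. Qed.

Lemma logn_sandpile_bound : logn 2 sandpile_bound = sandpile_v2.
Proof.
rewrite lognM ?expn_gt0 ?part_gt0 // pfactorK // logn_coprime ?addn0 //.
by rewrite coprime2n odd_2'part.
Qed.

Lemma vmax_last : (0 < vmax)%N -> exists x, [/\ (0 < x < n)%N, (logn 2 x + x)%N = vmax &
  forall k, (x < k < n)%N -> (logn 2 k + k < vmax)%N].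
Proof.
move=> vmax_gt0; pose P k := (0 < k < n)%N && (vmax <= logn 2 k + k)%N.
have exP : exists k, P k.
  have [/existsP[k Pk] | /existsPn noP] := boolP [exists k : 'I_n, P k]; first by exists k.
  suff : (vmax <= vmax.-1)%N by rewrite leqNgt ltn_predL vmax_gt0.
  apply/bigmax_leqP_seq => k; rewrite mem_index_iota => /andP[k_gt0 k_lt_n] _.
  by have := noP (Ordinal k_lt_n); rewrite /P /= k_gt0 k_lt_n -ltnNge; lia.
have [|x /andP[x_range le_vmax] x_max] := @ex_maxnP P n exP.
  by move=> k /andP[/andP[_ /ltnW]].
exists x; split=> // [|k k_range]; first by apply/eqP; rewrite eqn_leq le_vmax leq_vmax.
rewrite ltnNge; apply/negP => le_vmax_k.
have /x_max : P k by rewrite /P le_vmax_k andbT; lia.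
lia.
Qed.

Hypothesis n_gt0 : (0 < n)%N.

Lemma scale2_tau_int e k :
  (0 < k <= n)%N -> (k + logn 2 k <= e)%N -> scale2 e * tau k \is a Num.int.
Proof.
move=> /andP[k_gt0 le_kn] le_ke.
have def_k : (2 ^ logn 2 k * k`_(2^'))%N = k by rewrite -p_part partnC.
have [q def_fact] : exists q, odd_fact = (q * k`_(2^'))%N.
  by apply/dvdnP/partn_dvd; rewrite ?fact_gt0 ?dvdn_fact ?k_gt0.
suff -> : scale2 e * tau k = (2 ^ (e - (k + logn 2 k)) * q)%N%:R by apply: rpred_nat.
have kodd_neq0 : (k`_(2^'))%N%:R != 0 :> rat by rewrite pnatr_eq0 -lt0n part_gt0.
rewrite /scale2 /tau def_fact -[in (2 ^ e)%N](subnK le_ke) -[in 2%:R ^+ n](subnK le_kn).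
have -> : k%:R = (2 ^ logn 2 k * k`_(2^'))%N%:R :> rat by rewrite def_k.
by rewrite !natrM !natrX !exprD; field; rewrite kodd_neq0 !expf_neq0 ?pnatr_eq0.
Qed.

Lemma kappa_termE w i : (w + i < n)%N ->
  beta2_term w (N - w) i = (-1) ^+ i * 'C(N - w, i)%:R * tau (w + i).+1.
Proof.
by move=> lt_win; rewrite /beta2_term /tau (_ : N - w - i = n - (w + i).+1)%N ?mulrA //; lia.
Qed.

Lemma kappa_split w : (w <= N)%N ->
  kappa n w = \sum_(0 <= i < N - w) beta2_term w (N - w) i + (-1) ^+ (N - w) / n%:R.
Proof.
move=> le_wN; rewrite /kappa /beta2 big_ord_recr big_mkord /=; congr (_ + _).
by rewrite /beta2_term subnn binn expr0 !mulr1 subnKC // prednK.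
Qed.

Lemma scale2_kappa_body_int e w j :
  (forall k, (w + j < k < n)%N -> (k + logn 2 k <= e)%N) ->
  scale2 e * \sum_(j <= i < N - w) beta2_term w (N - w) i \is a Num.int.
Proof.
move=> le_ke; rewrite mulr_sumr big_seq rpred_sum // => i.
rewrite mem_index_iota => /andP[le_ji lt_iNw]; rewrite kappa_termE; last by lia.
rewrite mulrCA rpredM //; first by rewrite rpredM ?rpred_nat // rpredX ?rpredN1.
by apply: scale2_tau_int; [lia | apply: le_ke; lia].
Qed.

Lemma scale2_top_int e : (n + logn 2 n <= e.+1)%N -> scale2 e.+1 * tau n \is a Num.int.
Proof. by move=> le_ne; apply: scale2_tau_int le_ne; rewrite n_gt0 /=. Qed.

Lemma scale2_dipole_int (s w : nat) : (w <= N)%N ->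
  scale2 sandpile_v2 * ((-1) ^+ s * kappa n w - kappa n 0) \is a Num.int.
Proof.
move=> le_wN; rewrite (kappa_split le_wN) (kappa_split (leq0n N)).
set E := sandpile_v2.
have body_int w' : scale2 E * \sum_(0 <= i < N - w') beta2_term w' (N - w') i \is a Num.int.
  by apply: scale2_kappa_body_int => k k_range; apply: leq_sandpile_v2; lia.
have n_neq0 : n%:R != 0 :> rat by rewrite pnatr_eq0 -lt0n.
set S := \sum_(0 <= i < _) beta2_term w _ i; set S0 := \sum_(0 <= i < _) beta2_term 0 _ i.
(* The k = n terms are only integral in pairs: their difference is 2/n times a sign. *)
have -> : scale2 E * ((-1) ^+ s * (S + (-1) ^+ (N - w) / n%:R) - (S0 + (-1) ^+ (N - 0) / n%:R)) =
    (-1) ^+ s * (scale2 E * S) - scale2 E * S0 +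
    scale2 E.+1 * tau n * (((-1) ^+ (s + (N - w)) - (-1) ^+ (N - 0)) / 2%:R).
  rewrite /scale2 /tau subnn expr0 expnS -mulnA natrM exprD; field.
  by rewrite n_neq0 expf_neq0 ?pnatr_eq0.
have sign_int (b : nat) : ((-1) ^+ b : rat) \is a Num.int by rewrite rpredX ?rpredN1.
apply: rpredD; first apply: rpredB.
- by apply: rpredM; [exact: sign_int | exact: body_int].
- exact: body_int.
- by apply: rpredM (sign_diff_half_int _ _); apply/scale2_top_int/leq_sandpile_v2_top.
Qed.

Lemma pow2_dvdn_top m :
  m%:R * (kappa n N / D - - (kappa n N / D)) \is a Num.int ->
  (2 ^ (logn 2 n + n - 1) %| m)%N.
Proof.
move=> int_mX; apply: (pow2_dvdn_Qint (c := (n`_(2^'))%N) (y := 1) _ _ int_mX) => //.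
have def_n : (2 ^ logn 2 n * n`_(2^'))%N = n by rewrite -p_part partnC.
have nodd_neq0 : (n`_(2^'))%N%:R != 0 :> rat by rewrite pnatr_eq0 -lt0n part_gt0.
rewrite kappa_last // (_ : logn 2 n + n - 1 = logn 2 n + n.-1)%N; last by lia.
rewrite -[in 2%:R ^+ n](prednK n_gt0).
have -> : n%:R = (2 ^ logn 2 n * n`_(2^'))%N%:R :> rat by rewrite def_n.
rewrite !natrM !natrX exprD exprS.
by field; rewrite nodd_neq0 !expf_neq0 ?pnatr_eq0.
Qed.

Lemma scale2_tau_half x : (0 < x < n)%N ->
  exists2 q, odd q & scale2 (logn 2 x + x).-1 * tau x = q%:R / 2%:R.
Proof.
move=> /andP[x_gt0 lt_xn].
have def_x : (2 ^ logn 2 x * x`_(2^'))%N = x by rewrite -p_part partnC.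
have [q def_fact] : exists q, odd_fact = (q * x`_(2^'))%N.
  by apply/dvdnP/partn_dvd; rewrite ?fact_gt0 // dvdn_fact // x_gt0 ltnW.
exists q.
  by have := odd_2'part n`!; rewrite -/odd_fact def_fact oddM => /andP[].
have xodd_neq0 : (x`_(2^'))%N%:R != 0 :> rat by rewrite pnatr_eq0 -lt0n part_gt0.
rewrite /scale2 /tau def_fact -[in 2%:R ^+ n](subnK (ltnW lt_xn)).
have -> : x%:R = (2 ^ logn 2 x * x`_(2^'))%N%:R :> rat by rewrite def_x.
rewrite (_ : (logn 2 x + x).-1 = logn 2 x + x.-1)%N; last by lia.
set t := (n - x)%N; rewrite -[in 2%:R ^+ (t + x)](prednK x_gt0) !natrM !natrX !exprD exprS.
by field; rewrite xodd_neq0 !expf_neq0 ?pnatr_eq0.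
Qed.

Lemma scale2_kappa_step_int x : (0 < x < n)%N ->
  (forall k, (x < k < n)%N -> (logn 2 k + k < vmax)%N) -> (logn 2 n + n - 1 < vmax)%N ->
  scale2 vmax.-1 * (kappa n x.-1 - kappa n x - tau x) \is a Num.int.
Proof.
move=> /andP[x_gt0 lt_xn] vmax_after top_lt; set e := vmax.-1.
rewrite (kappa_split (w := x.-1)) ?(kappa_split (w := x)); try lia.
rewrite big_ltn; last lia.
rewrite kappa_termE; last lia.
rewrite expr0 bin0 !mul1r addn0 prednK //.
set S1 := \sum_(1 <= i < _) _; set S2 := \sum_(0 <= i < _) _.
have -> : scale2 e * (tau x + S1 + (-1) ^+ (N - x.-1) / n%:R - (S2 + (-1) ^+ (N - x) / n%:R)
    - tau x) = scale2 e * S1 - scale2 e * S2 +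
    scale2 e.+1 * tau n * (((-1) ^+ (N - x.-1) - (-1) ^+ (N - x)) / 2%:R).
  rewrite /scale2 /tau subnn expr0 expnS -mulnA natrM; field.
  by rewrite !pnatr_eq0 -!lt0n n_gt0 x_gt0 expf_neq0 ?pnatr_eq0.
apply: rpredD; first apply: rpredB.
- by apply: scale2_kappa_body_int => k k_range; have := vmax_after k; lia.
- by apply: scale2_kappa_body_int => k k_range; have := vmax_after k; lia.
- by apply: rpredM (sign_diff_half_int _ _); apply: scale2_top_int; lia.
Qed.

Lemma pow2_dvdn_step m x : (0 < x < n)%N -> (logn 2 x + x)%N = vmax ->
  (forall k, (x < k < n)%N -> (logn 2 k + k < vmax)%N) ->
  (logn 2 n + n - 1 < vmax)%N ->
  m%:R * (kappa n x.-1 / D - kappa n x / D) \is a Num.int -> (2 ^ vmax %| m)%N.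
Proof.
move=> x_range vmax_x vmax_after top_lt int_mX.
have [z def_z] := intrP (scale2_kappa_step_int x_range vmax_after top_lt).
have [q q_odd half_q] := scale2_tau_half x_range; rewrite vmax_x in half_q.
apply: (pow2_dvdn_Qint (c := odd_fact) (y := 2 * z + q%:Z) _ _ int_mX).
  by rewrite rpredDl ?dvdz_mulr // dvdzE /= dvdn2 negbK.
transitivity (2%:R * (scale2 vmax.-1 * (kappa n x.-1 - kappa n x - tau x)
  + scale2 vmax.-1 * tau x)).
  rewrite /scale2 -[in (2 ^ vmax)%N](prednK (leq_ltn_trans (leq0n _) top_lt)) expnS -mulnA.
  by rewrite natrM; field; rewrite expf_neq0 ?pnatr_eq0.
by rewrite def_z half_q rmorphD rmorphM /=; field.
Qed.

End Integrality.

Section LaplacianImage.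
Variable n : nat.
Local Notation V := (cube_vertex n).
Local Notation cV := 'cV[int]_(cube_N n).

Definition delta_cv (a : V) : cV := \col_j (enum_val j == a)%:R.

Definition cv_of (X : V -> int) : cV := \col_j X (enum_val j).

Lemma in_lap_image_cv_of (X d : V -> int) :
  (forall v, cube_lap X v = d v) -> in_lap_image (cv_of d).
Proof.
move=> lapX; exists (cv_of X); apply/matrixP => j k.
rewrite (ord1 k) -[j](enum_valK j) cube_laplacianE !mxE enum_rankK -lapX.
by apply: eq_cube_lap => w; rewrite mxE enum_rankK.
Qed.

Lemma in_lap_image0 : in_lap_image (0 : cV).
Proof. by exists 0; rewrite mulmx0. Qed.

Lemma in_lap_imageD (u v : cV) : in_lap_image u -> in_lap_image v -> in_lap_image (u + v).
Proof. by move=> [x <-] [y <-]; exists (x + y); rewrite mulmxDr. Qed.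

Lemma in_lap_imageN (u : cV) : in_lap_image u -> in_lap_image (- u).
Proof. by move=> [x <-]; exists (- x); rewrite mulmxN. Qed.

Lemma in_lap_imageZ (z : int) (u : cV) : in_lap_image u -> in_lap_image (z *: u).
Proof. by move=> [x <-]; exists (z *: x); rewrite scalemxAr. Qed.

Lemma in_lap_imageMn (u : cV) k : in_lap_image u -> in_lap_image (u *+ k).
Proof. by rewrite -scaler_nat; apply: in_lap_imageZ. Qed.

Lemma in_lap_image_sum (I : finType) (F : I -> cV) :
  (forall i, in_lap_image (F i)) -> in_lap_image (\sum_i F i).
Proof.
by move=> imF; apply: (big_ind (@in_lap_image n)); [apply: in_lap_image0 | apply: in_lap_imageD |].
Qed.

Lemma coker_torsion_sum0 (v : cV) : coker_torsion v -> \sum_j v j 0 = 0.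
Proof.
move=> [k [k_gt0 [x lapx]]].
have : \sum_j (cube_laplacian n *m x) j 0 = 0.
  rewrite (reindex _ (onW_bij _ (@enum_rank_bij _))) /=.
  under eq_bigr do rewrite cube_laplacianE.
  exact: sum_cube_lap.
rewrite lapx; under eq_bigr do rewrite mulmxnE.
by rewrite sumrMnl => /eqP; rewrite mulrn_eq0 eqn0Ngt k_gt0 => /eqP.
Qed.

End LaplacianImage.

Section UpperBound.
Variable n : nat.
Hypothesis n_gt0 : (0 < n)%N.
Local Notation V := (cube_vertex n).
Local Notation D := (2%:R ^+ n : rat).
Local Notation c := (sandpile_bound n).
Implicit Types (a h u : V) (i : 'I_n).

Lemma sandpile_bound_gt0 : (0 < c)%N.
Proof. by rewrite muln_gt0 expn_gt0 part_gt0. Qed.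

Lemma scaled_dipole_int a i h : c%:R * (dipole a i h - dipole a i a) \is a Num.int.
Proof.
rewrite /dipole.
have -> : cube_add a a = cube0 by apply/eqP; rewrite cube_add_eq0.
rewrite !green_flip cube0E wt_cube0.
set u := cube_add h a.
have scaleE s y : c%:R * ((-1) ^+ s * (y / D) - kappa n 0 / D) =
    scale2 n (sandpile_v2 n) * ((-1) ^+ s * y - kappa n 0).
  by rewrite /scale2 /sandpile_bound; field; rewrite expf_neq0 ?pnatr_eq0.
case: ifP => ui.
  rewrite -mulN1r -(expr1 (-1)) scaleE scale2_dipole_int //.
  by have := wt_leq u; lia.
rewrite -(mul1r (_ / D)) -(expr0 (-1)) scaleE scale2_dipole_int //.
by have := wt_ltn (negbT ui); lia.
Qed.

Lemma edge_in_lap_image a i : in_lap_image ((delta_cv a - delta_cv (flip a i)) *+ c).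
Proof.
pose X h := Num.floor (c%:R * (dipole a i h - dipole a i a)).
have XE h : (X h)%:~R = c%:R * (dipole a i h - dipole a i a).
  by rewrite /X floorK ?scaled_dipole_int.
have -> : (delta_cv a - delta_cv (flip a i)) *+ c =
    cv_of (fun h => ((h == a)%:R - (h == flip a i)%:R) *+ c).
  by apply/matrixP => j k; rewrite mulmxnE !mxE.
apply: (in_lap_image_cv_of (X := X)) => h; apply: (@intr_inj rat).
rewrite (raddf_cube_lap intr) (eq_cube_lap XE) cube_lapMl cube_lapB cube_lap_cst subr0.
by rewrite cube_lap_dipole // rmorphMn rmorphB /= !rmorph_nat mulr_natl.
Qed.

Lemma delta_sub0_in_lap_image u : in_lap_image ((delta_cv u - delta_cv cube0) *+ c).
Proof.
elim: {u}(wt u) {-2}u (erefl (wt u)) => [|k IHk] u wt_u.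
  by move/eqP: wt_u; rewrite wt_eq0 => /eqP ->; rewrite subrr mul0rn; apply: in_lap_image0.
have [i ui] : exists i, u i.
  apply/existsP; apply: contraT; rewrite negb_exists => /forallP not_u.
  have : wt u == 0%N by rewrite wt_eq0; apply/eqP/ffunP => j; rewrite cube0E; apply/negbTE.
  by rewrite wt_u.
rewrite -(subrK (delta_cv (flip u i)) (delta_cv u)) -addrA mulrnDl.
by apply: in_lap_imageD; [apply: edge_in_lap_image | apply: IHk; rewrite wt_flip ui wt_u].
Qed.

Lemma sum0_in_lap_image (v : 'cV[int]_(cube_N n)) :
  \sum_j v j 0 = 0 -> in_lap_image (v *+ c).
Proof.
move=> v_sum0.
have -> : v *+ c = \sum_j v j 0 *: ((delta_cv (enum_val j) - delta_cv cube0) *+ c).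
  apply/matrixP => k l; rewrite (ord1 l) mulmxnE summxE.
  under eq_bigr => j _ do rewrite mxE mulmxnE !mxE (inj_eq enum_val_inj) mulrnBl mulrBr.
  rewrite sumrB -big_distrl /= v_sum0 mul0r subr0 (bigD1 k) //= eqxx big1 ?addr0.
    by rewrite mulr_natr.
  by move=> j /negbTE; rewrite eq_sym => ->; rewrite mul0rn mulr0.
by apply: in_lap_image_sum => j; apply/in_lap_imageZ/delta_sub0_in_lap_image.
Qed.

Lemma annihilates_sandpile_bound : annihilates_sandpile n c.
Proof. by move=> v /coker_torsion_sum0; apply: sum0_in_lap_image. Qed.

End UpperBound.

Section LowerBound.
Variable n : nat.
Hypothesis n_gt0 : (0 < n)%N.
Local Notation V := (cube_vertex n).
Local Notation D := (2%:R ^+ n : rat).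
Implicit Types (a g : V) (i j : 'I_n).

(* By symmetry of L, pairing L Y = m (delta_g - delta_(flip g j)) with
   [dipole a i] gives Y a - Y (flip a i). *)
Lemma annihilator_dipole_int m a i g j : annihilates_sandpile n m ->
  m%:R * (dipole a i g - dipole a i (flip g j)) \is a Num.int.
Proof.
move=> ann_m.
have torsion : coker_torsion (delta_cv g - delta_cv (flip g j)).
  by exists (sandpile_bound n); split; [exact: sandpile_bound_gt0 | exact: edge_in_lap_image].
have [y lapy] := ann_m _ torsion; pose Y h := y (enum_rank h) 0.
have lapY h : cube_lap Y h = ((h == g)%:R - (h == flip g j)%:R) *+ m.
  by rewrite -cube_laplacianE lapy mulmxnE !mxE enum_rankK.
have sum_delta (F : V -> rat) b : \sum_h F h * (h == b)%:R = F b.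
  by rewrite (bigD1 b) //= eqxx mulr1 big1 ?addr0 // => h /negbTE ->; rewrite mulr0.
suff -> : m%:R * (dipole a i g - dipole a i (flip g j)) = (Y a)%:~R - (Y (flip a i))%:~R.
  by rewrite rpredB ?rpred_int.
transitivity (\sum_h dipole a i h * (cube_lap Y h)%:~R).
  under eq_bigr do rewrite lapY rmorphMn rmorphB /= !rmorph_nat mulrnAr mulrBr.
  by rewrite sumrMnl sumrB !sum_delta mulr_natl.
under eq_bigr do rewrite (raddf_cube_lap intr).
rewrite cube_lap_sym; under eq_bigr do rewrite cube_lap_dipole // mulrC mulrBr.
by rewrite sumrB !sum_delta.
Qed.

Lemma dipole0_prefix i k : (k <= n)%N ->
  dipole cube0 i (cube_prefix n k) = if (i < k)%N then - (kappa n k.-1 / D) else kappa n k / D.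
Proof. by move=> le_kn; rewrite /dipole cube_addr0 green_flip ffunE wt_cube_prefix. Qed.

Lemma pow2_dvdn_annihilator m : annihilates_sandpile n m -> (2 ^ sandpile_v2 n %| m)%N.
Proof.
move=> ann_m; have lt_Nn : (n.-1 < n)%N by rewrite ltn_predL.
pose i_last := Ordinal lt_Nn.
rewrite /sandpile_v2; case: (leqP (vmax n) (logn 2 n + n - 1)%N) => [_ | top_lt].
  apply: pow2_dvdn_top => //.
  have := annihilator_dipole_int cube0 i_last (cube_prefix n n.-1) i_last ann_m.
  by rewrite flip_cube_prefix prednK // !dipole0_prefix ?leq_pred //= ltnn lt_Nn.
have [x [x_range vmax_x vmax_after]] := vmax_last (leq_ltn_trans (leq0n _) top_lt).
have lt_x1n : (x.-1 < n)%N by lia.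
have := annihilator_dipole_int cube0 i_last (cube_prefix n x.-1) (Ordinal lt_x1n) ann_m.
rewrite flip_cube_prefix prednK; last by lia.
rewrite !dipole0_prefix /=; try lia.
rewrite !ifN; try lia.
exact: pow2_dvdn_step.
Qed.

End LowerBound.

Local Close Scope ring_scope.

Lemma least_dvdn (P : nat -> Prop) c :
  (forall a b, b <= a -> P a -> P b -> P (a - b)) ->
  (forall a k, P a -> P (k * a)) ->
  0 < c -> P c -> (forall m, 0 < m -> P m -> c <= m) ->
  forall m, P m -> c %| m.
Proof.
move=> PB PM c_gt0 Pc c_min m Pm; rewrite /dvdn; apply: contraT; rewrite -lt0n => mod_gt0.
have : P (m %% c).
  rewrite -[in m %% c](addKn (m %/ c * c) (m %% c)) -divn_eq.
  by apply: PB (PM _ _ Pc) => //; apply: leq_divM.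
by move/(c_min _ mod_gt0); rewrite leqNgt ltn_pmod.
Qed.

Lemma annihilates_sandpileB n a b : b <= a ->
  annihilates_sandpile n a -> annihilates_sandpile n b -> annihilates_sandpile n (a - b).
Proof.
move=> le_ba ann_a ann_b v tv; rewrite mulrnBr //.
exact: in_lap_imageD (ann_a v tv) (in_lap_imageN (ann_b v tv)).
Qed.

Lemma annihilates_sandpileM n a k :
  annihilates_sandpile n a -> annihilates_sandpile n (k * a).
Proof. by move=> ann_a v tv; rewrite mulnC mulrnA; apply/in_lap_imageMn/ann_a. Qed.

Theorem mainTheorem3 (n : nat) (hn : (2 <= n)%N) :
  exists c1 : nat, is_sandpile_exponent n c1 /\
    logn 2 c1 = maxn (\max_(1 <= x < n) (logn 2 x + x))%N (logn 2 n + n - 1)%N.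
Proof.
have n_gt0 : 0 < n by apply: leq_trans hn.
pose P m := 0 < m /\ annihilates_sandpile n m.
have P_bound : P (sandpile_bound n).
  by split; [apply: sandpile_bound_gt0 | apply: annihilates_sandpile_bound].
have [c1 [[[c1_gt0 ann_c1] c1_min] _]] :=
  dec_inh_nat_subset_has_unique_least_element P (fun m => classic (P m)) (ex_intro P _ P_bound).
have c1_least m : 0 < m -> annihilates_sandpile n m -> c1 <= m.
  by move=> m_gt0 ann_m; apply/ssrnat.leP; apply: c1_min.
exists c1; split; first by split.
have c1_dvd : c1 %| sandpile_bound n.
  apply: (least_dvdn (annihilates_sandpileB (n := n)) (annihilates_sandpileM (n := n))) => //.
  by case: P_bound.
apply/eqP; rewrite -/(sandpile_v2 n) eqn_leq -(pfactor_dvdn _ _ c1_gt0) //.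
rewrite pow2_dvdn_annihilator // andbT -logn_sandpile_bound.
by apply: dvdn_leq_log; rewrite ?sandpile_bound_gt0.
Qed.
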